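(* Let $f$ be a strategy-proof SCF and $G$ a gradual mechanism implementing $f$. Then $G$ is incentive compatible if and only if $G$ is reaction-proof.
   Context: Setting. $N$ finite set of agents, $X$ finite set of outcomes, finite type spaces $\Theta_i$, each type $\theta_i$ inducing a complete transitive preference $R(\theta_i)$ on $X$; $\Theta=\prod_i\Theta_i$. An SCF $f:\Theta\to X$ is strategy-proof if $f(\theta_i,\theta_{-i})\,R(\theta_i)\,f(\theta_i',\theta_{-i})$ for all $i,\theta_i,\theta_i',\theta_{-i}$. Dynamic game forms. A dynamic game form with perfect recall consists of a finite tree $\bar H$ of histories (finite sequences of action profiles) containing the empty initial history $\varnothing$, closed under prefixes ($\preceq$ prefix order, $\prec$ strict); terminal histories $Z$, non-terminal $H$; at each $h\in H$ a nonempty set $\mathbb P(h)$ of agents move simultaneously with available actions $A_i(h)$, all action profiles leading to successors; $\mathbb P(\varnothing)=N$; each agent's decision nodes $H_i$ are partitioned into information sets $\boldsymbol H_i$, with available actions constant on information sets and perfect recall; $\mathcal X:Z\to X$. For information sets of $i$, $\boldsymbol h_i\prec\bar{\boldsymbol h}_i$ if $h\prec\bar h$ for some $h\in\boldsymbol h_i,\bar h\in\bar{\boldsymbol h}_i$; $\bar{\boldsymbol h}_i$ is an immediate successor of $\boldsymbol h_i$ if $\boldsymbol h_i\prec\bar{\boldsymbol h}_i$ and no information set of $i$ lies strictly between them. Strategies choose an available action at each information set; $s_M$ denotes a profile for agents in $M$ ($s_{-i}$, $s_{-i,j}$ for agents other than $i$, other than $i,j$); a complete profile $s$ determines $z(s)$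 and $\mathcal X(s)=\mathcal X(z(s))$. Gradual mechanisms. A GM implementing $f$ is such a game form in which (1) actions of $i$ are nonempty subsets of $\Theta_i$; (2) at every $h\in H_i$ the available actions of $i$ are pairwise disjoint with union $\Theta_i(h)$, where for any history $h$, $\Theta_i(h)$ is the last action of $i$ in $h$ ($\Theta_i$ if $i$ has not acted); (3) $\mathcal X(z)=f(\theta)$ for all $z\in Z$, $\theta\in\Theta(z)=\prod_i\Theta_i(z)$. For a history $h$, $\Theta(h)=\prod_i\Theta_i(h)$; for an information set, $\Theta_i(\boldsymbol h_i)=\Theta_i(h)$ for $h\in\boldsymbol h_i$. Consistency. A history $h$ is consistent with $s_M$ ($M\subsetneq N$) if $h\preceq z(s_M,s_{N\setminus M})$ for some $s_{N\setminus M}$; a type profile $\theta$ is consistent with $s_M$ if the unique $z\in Z$ with $\theta\in\Theta(z)$ is. Incentive compatibility. $s_i$ is unconditional for $\theta_i$ if $\theta_i\in s_i(h)$ for every $h\in H_i$ with $\theta_i\in\Theta_i(h)$ (denoted $s_{\theta_i}$). The GM is incentive compatible if $\mathcal X(s_{\theta_i},s_{-i})\,R(\theta_i)\,\mathcal X(s_i,s_{-i})$ for all $i,\theta_i$, unconditional $s_{\theta_i}$, $s_i$, $s_{-i}$. Reaction-proofness. A GM $G$ implementing $f$ is reaction-proof if for any two distinct agents $i,j\in N$, any pair of distinct information sets $\boldsymbol h_i^1,\boldsymbol h_i^2$ of $i$ that are immediate successors of a common information set $\boldsymbol h_i$ of $i$ with $\Theta_i(\boldsymbol h_i^1)=\Theta_i(\boldsymbol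 h_i^2)$, and any histories $h^1\in\boldsymbol h_i^1$, $h^2\in\boldsymbol h_i^2$ that are both consistent with a common strategy profile $s_{-i,j}$, we have $f(\theta^1)\,R(\theta_j^1)\,f(\theta^2)$ for all $\theta^1\in\Theta(h^1)$ and $\theta^2\in\Theta(h^2)$ that are consistent with $s_{-i,j}$. *)

From mathcomp Require Import all_boot.
Set Implicit Arguments. Unset Strict Implicit. Unset Printing Implicit Defensive.

Section GradualMechanisms.
Variables (Agent : finType) (Theta : Agent -> finType) (X : finType).

Definition tprofile := forall i : Agent, Theta i.

(* An action profile at a history: for each agent, Some action (a nonempty
   subset of Theta_i) if the agent moves there, None otherwise. *)
Definition aprofile := {dffun forall i : Agent, option {set Theta i}}.

Definition history := seq aprofile.

(* A (candidate) dynamic game form with set-valued actions: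
   - tree   : the finite set of histories Hbar
   - mover  : P(h)
   - avail  : A_i(h)
   - info   : information-set label of i at h (h, h' in H_i lie in the same
              information set of i iff their labels agree)
   - outc   : the outcome function (relevant on terminal histories). *)
Record game := Game {
  tree : seq history;
  mover : history -> {set Agent};
  avail : history -> forall i : Agent, {set {set Theta i}};
  info : forall i : Agent, history -> nat;
  outc : history -> X }.

Variable G : game.

Definition terminal (h : history) : bool :=
  (h \in tree G) && [forall a : aprofile, rcons h a \notin tree G].
Definition nonterminal (h : history) : bool :=
  (h \in tree G) && [exists a : aprofile, rcons h a \in tree G].
Definition dnode (i : Agent) (h : history) : bool :=
  nonterminal h && (i \in mover G h).

Definition valid_aprofile (h : history) (a : aprofile) : bool :=
  [forall i, if i \in mover G h
             then (if a i is Some x then x \in avail G h i else false)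
             else a i == None].

(* i's experience along h: the (information set, action) pairs of i
   at the proper prefixes of h where i moves. *)
Definition prefixes (h : history) : seq history :=
  [seq take k h | k <- iota 0 (size h)].
Definition experience (i : Agent) (h : history) : seq (nat * option {set Theta i}) :=
  map (fun p : history * aprofile => (info G i p.1, (p.2 : aprofile) i))
      (filter (fun p : history * aprofile => i \in mover G p.1) (zip (prefixes h) h)).

Definition is_game_form : Prop :=
  [::] \in tree G /\
  (forall h a, rcons h a \in tree G -> h \in tree G) /\
  mover G [::] = setT /\
  (forall h, nonterminal h -> mover G h != set0) /\
  (forall h, nonterminal h -> forall a, (rcons h a \in tree G) = valid_aprofile h a) /\
  (forall i h, dnode i h -> avail G h i != set0) /\
  (forall i h h', dnode i h -> dnode i h' -> info G i h = info G i h' ->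
      avail G h i = avail G h' i) /\
      (forall i h h', dnode i h -> dnode i h' -> info G i h = info G i h' ->
          experience i h = experience i h').

Definition thetai (h : history) (i : Agent) : {set Theta i} :=
  foldl (fun acc (a : aprofile) => if a i is Some x then x else acc) setT h.

Definition in_Theta (h : history) (th : tprofile) : Prop :=
  forall i, th i \in thetai h i.

Definition is_GM (f : tprofile -> X) : Prop :=
  [/\ is_game_form,
      (forall i h, dnode i h -> forall A, A \in avail G h i -> A != set0),
      (forall i h, dnode i h -> forall A B, A \in avail G h i -> B \in avail G h i ->
          A != B -> [disjoint A & B]),
      (forall i h, dnode i h -> \bigcup_(A in avail G h i) A = thetai h i)
    & (forall z th, terminal z -> in_Theta z th -> outc G z = f th)].

(* Strategies: a choice of action for each information set (label) of i. *)
Definition strat (i : Agent) := nat -> {set Theta i}.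
Definition sprofile := forall i : Agent, strat i.

Definition valid_strat (i : Agent) (s : strat i) : Prop :=
  forall h, dnode i h -> s (info G i h) \in avail G h i.
Definition valid_sprofile (s : sprofile) : Prop := forall i, valid_strat (s i).

Definition act_of (s : sprofile) (h : history) : aprofile :=
  [ffun i => if i \in mover G h then Some (s i (info G i h)) else None].
Definition step (s : sprofile) (h : history) : history :=
  if nonterminal h then rcons h (act_of s h) else h.
(* z(s): the play of s (the tree depth is < size (tree G)). *)
Definition play (s : sprofile) : history := iter (size (tree G)) (step s) [::].
Definition outcome (s : sprofile) : X := outc G (play s).

Definition consistent_h (M : {set Agent}) (s : sprofile) (h : history) : Prop :=
  exists t : sprofile, [/\ valid_sprofile t, (forall j, j \in M -> s j =1 t j)
                       & prefix h (play t)].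
Definition consistent_theta (M : {set Agent}) (s : sprofile) (th : tprofile) : Prop :=
  exists z, [/\ terminal z, in_Theta z th & consistent_h M s z].

Definition unconditional (i : Agent) (ti : Theta i) (si : strat i) : Prop :=
  forall h, dnode i h -> ti \in thetai h i -> ti \in si (info G i h).

Variable R : forall i : Agent, Theta i -> rel X.

Definition incentive_compatible : Prop :=
  forall (i : Agent) (ti : Theta i) (s s' : sprofile),
    valid_sprofile s -> valid_sprofile s' ->
    (forall j, j != i -> s j =1 s' j) ->
    unconditional ti (s i) ->
    @R i ti (outcome s) (outcome s').

Definition in_infoset (i : Agent) (k : nat) (h : history) : bool :=
  dnode i h && (info G i h == k).
Definition iprec (i : Agent) (k k' : nat) : Prop :=
  exists h h', [/\ in_infoset i k h, in_infoset i k' h', prefix h h' & h != h'].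
Definition imm_succ (i : Agent) (k k' : nat) : Prop :=
  iprec i k k' /\ ~ (exists k'', iprec i k k'' /\ iprec i k'' k').

Definition reaction_proof (f : tprofile -> X) : Prop :=
  forall (i j : Agent), i != j ->
  forall (k k1 k2 : nat) (h1 h2 : history) (s : sprofile),
    let M := setT :\ i :\ j in
    k1 != k2 -> imm_succ i k k1 -> imm_succ i k k2 ->
    in_infoset i k1 h1 -> in_infoset i k2 h2 ->
    thetai h1 i = thetai h2 i ->
    (forall l, l \in M -> valid_strat (s l)) ->
    consistent_h M s h1 -> consistent_h M s h2 ->
    forall th1 th2 : tprofile,
      in_Theta h1 th1 -> in_Theta h2 th2 ->
      consistent_theta M s th1 -> consistent_theta M s th2 ->
      @R j (th1 j) (f th1) (f th2).

End GradualMechanisms.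

Definition complete_rel (X : Type) (r : rel X) : Prop := forall x y, r x y || r y x.

Definition strategy_proof (Agent : finType) (Theta : Agent -> finType) (X : finType)
  (R : forall i : Agent, Theta i -> rel X) (f : tprofile Theta -> X) : Prop :=
  forall (i : Agent) (th th' : tprofile Theta),
    (forall j, j != i -> th j = th' j) -> R i (th i) (f th) (f th').

From mathcomp Require Import all_boot.
Set Implicit Arguments. Unset Strict Implicit. Unset Printing Implicit Defensive.

(* If G is incentive compatible and agent i reaches two distinct immediate
   successors of an information set with the same Theta_i, the two plays come
   from strategy profiles that differ only in the strategy of a single agent j:
   i's strategies can be spliced, because along the two plays they only meet at
   common information sets, where they agree. Incentive compatibility for j,
   whose strategy is made truthful off the first play, compares the outcomes.
   Conversely, let agent d deviate from a truthful strategy. If every other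
   agent has comparable experiences along the two plays, some type profile of
   the others is compatible with both terminal histories and strategy-proofness
   compares the outcomes. Otherwise the experiences of some agent l first differ,
   at two immediate successors of a common information set of l with the same
   Theta_l, and reaction-proofness for (l, d) applies. *)

Section Prefix.
Variable T : eqType.
Implicit Types (s u v z : seq T).

Lemma prefix_rconsP u v (a : T) : prefix u (rcons v a) -> u = rcons v a \/ prefix u v.
Proof.
case/prefixP => w; case/lastP: w => [|w b]; first by rewrite cats0 => ->; left.
by rewrite -rcons_cat => /rcons_inj [-> _]; right; exact: prefix_prefix.
Qed.

Lemma prefix_comparable u v z : prefix u z -> prefix v z -> prefix u v || prefix v u.
Proof.
rewrite !prefixE => /eqP eu /eqP ev.
case: (leqP (size u) (size v)) => H.
  by rewrite -ev take_takel // eu eqxx.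
by rewrite -eu take_takel ?ev ?eqxx ?orbT // ltnW.
Qed.

Lemma prefix_size_eq u v : prefix u v -> size u = size v -> u = v.
Proof. by rewrite prefixE => /eqP e se; rewrite -e se take_size. Qed.

Lemma prefix_size_lt u v : prefix u v -> u != v -> size u < size v.
Proof.
move=> puv; apply: contraR; rewrite -leqNgt => svu.
by apply/eqP/prefix_size_eq => //; apply/eqP; rewrite eqn_leq size_prefix.
Qed.

Lemma take_size_prefix (x0 : T) u z : prefix u z -> size u < size z ->
  take (size u).+1 z = rcons u (nth x0 z (size u)).
Proof. by rewrite prefixE => /eqP pu su; rewrite (take_nth x0 su) pu. Qed.

Lemma prefix_first_mismatch (x0 : T) s1 s2 : ~~ prefix s1 s2 -> ~~ prefix s2 s1 ->
  exists n, [/\ n < size s1, n < size s2, take n s1 = take n s2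
              & nth x0 s1 n != nth x0 s2 n].
Proof.
elim: s1 s2 => [|a s1 IH] [|b s2] //=.
case: (eqVneq a b) => [<-|ab] /=; rewrite ?eqxx /= => H1 H2; last by exists 0.
by have [n [? ? ? ?]] := IH _ H1 H2; exists n.+1; split => //=; congr cons.
Qed.

Lemma agreeing_before_mismatch (T' : eqType) (x0 : T) (g : T -> T') s1 s2 p q :
  take p s1 = take p s2 -> g (nth x0 s1 p) = g (nth x0 s2 p) ->
  take q s1 = take q s2 -> g (nth x0 s1 q) != g (nth x0 s2 q) -> p < q.
Proof.
move=> tp gp tq; case: (ltngtP p q) => // [qp|<-]; last by rewrite gp eqxx.
by rewrite -(nth_take x0 qp s1) tp nth_take // eqxx.
Qed.

End Prefix.

Section Experience.
Variables (Agent : finType) (Theta : Agent -> finType) (X : finType) (G : game Theta X).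
Implicit Types (h u v z : history Theta) (a b : aprofile Theta).

Definition no_action : aprofile Theta := [ffun => None].
Definition no_event l : nat * option {set Theta l} := (0, None).

Lemma prefixes_rcons h a : prefixes (rcons h a) = rcons (prefixes h) h.
Proof.
rewrite /prefixes size_rcons -addn1 iotaD add0n map_cat /= cats1; congr rcons.
  apply/eq_in_map => k; rewrite mem_iota add0n => /andP[_ kh].
  by rewrite -cats1 takel_cat // ltnW.
by rewrite -cats1 take_size_cat.
Qed.

Lemma experience_rcons l h a : experience G l (rcons h a) =
  experience G l h ++ (if l \in mover G h then [:: (info G l h, a l)] else [::]).
Proof.
have sp : size (prefixes h) = size h by rewrite size_map size_iota.
rewrite /experience prefixes_rcons zip_rcons // filter_rcons /=.
by case: ifP => _; rewrite ?cats0 // map_rcons cats1.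
Qed.

Lemma experience_prefix l u v : prefix u v -> prefix (experience G l u) (experience G l v).
Proof.
elim/last_ind: v => [|v b IH]; first by rewrite prefixs0 => /eqP ->.
case/prefix_rconsP => [-> | /IH pe]; first exact: prefix_refl.
by rewrite experience_rcons; exact: prefix_catl.
Qed.

Lemma experience_at_move l u z : prefix u z -> size u < size z -> l \in mover G u ->
  prefix (rcons (experience G l u) (info G l u, nth no_action z (size u) l))
         (experience G l z).
Proof.
move=> pu su mu; have /(experience_prefix l) : prefix (take (size u).+1 z) z := prefix_take _ _.
apply: prefix_trans; rewrite (take_size_prefix no_action pu su) experience_rcons mu cats1.
exact: prefix_refl.
Qed.

Lemma size_experience_lt l u v : prefix u v -> u != v -> l \in mover G u ->
  size (experience G l u) < size (experience G l v).
Proof.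
move=> puv nuv m; have su := prefix_size_lt puv nuv.
by have /size_prefix := experience_at_move puv su m; rewrite size_rcons.
Qed.

Lemma experience_nth l u z : prefix u z -> size u < size z -> l \in mover G u ->
  [/\ take (size (experience G l u)) (experience G l z) = experience G l u,
      nth (no_event l) (experience G l z) (size (experience G l u))
        = (info G l u, nth no_action z (size u) l)
    & size (experience G l u) < size (experience G l z)].
Proof.
move=> pu su mu; have st := experience_at_move pu su mu.
have sl := size_prefix st; rewrite size_rcons in sl.
move: st; rewrite prefixE size_rcons => /eqP st; split => //.
- by rewrite -(take_takel _ (leqnSn _)) st -cats1 take_size_cat.
- by rewrite -(nth_take _ (ltnSn _)) st nth_rcons ltnn eqxx.
Qed.

Lemma experience_nth_move l z n : n < size (experience G l z) ->
  exists u, [/\ prefix u z, size u < size z, l \in mover G u,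
     experience G l u = take n (experience G l z) &
     nth (no_event l) (experience G l z) n = (info G l u, nth no_action z (size u) l)].
Proof.
elim/last_ind: z n => [|z b IH] n; first by rewrite /experience.
rewrite experience_rcons size_cat; case: (ltnP n (size (experience G l z))) => Hlt Hn.
  have [u [pu su mu eu nu]] := IH _ Hlt; exists u; split => //.
  - exact: prefix_trans pu (prefix_rcons _ _).
  - by rewrite size_rcons ltnS ltnW.
  - by rewrite takel_cat // ltnW.
  - by rewrite nth_cat Hlt nu nth_rcons su.
move: Hn; case: ifP => m /=; last by rewrite addn0 ltnNge Hlt.
rewrite addn1 ltnS => Hn; have -> : n = size (experience G l z) by apply/eqP; rewrite eqn_leq Hn.
exists z; split => //.
- exact: prefix_rcons.
- by rewrite size_rcons.
- by rewrite take_size_cat.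
- by rewrite nth_cat ltnn subnn /= nth_rcons ltnn eqxx.
Qed.

End Experience.

Arguments no_action {Agent Theta}.
Arguments no_event {Agent Theta}.

Section GameForm.
Variables (Agent : finType) (Theta : Agent -> finType) (X : finType) (G : game Theta X).
Implicit Types (h u v z : history Theta) (a b : aprofile Theta) (s t : sprofile Theta).

Hypothesis root_in_tree : [::] \in tree G.
Hypothesis tree_rcons : forall h a, rcons h a \in tree G -> h \in tree G.
Hypothesis mover_root : mover G [::] = setT.
Hypothesis tree_succ : forall h, nonterminal G h ->
  forall a, (rcons h a \in tree G) = valid_aprofile G h a.
Hypothesis avail_info : forall i h h', dnode G i h -> dnode G i h' ->
  info G i h = info G i h' -> avail G h i = avail G h' i.
Hypothesis perfect_recall : forall i h h', dnode G i h -> dnode G i h' ->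
  info G i h = info G i h' -> experience G i h = experience G i h'.
Hypothesis avail_neq0 : forall i h, dnode G i h -> avail G h i != set0.
Hypothesis action_neq0 : forall i h, dnode G i h ->
  forall A, A \in avail G h i -> A != set0.
Hypothesis action_disjoint : forall i h, dnode G i h -> forall A B,
  A \in avail G h i -> B \in avail G h i -> A != B -> [disjoint A & B].
Hypothesis action_cover : forall i h, dnode G i h ->
  \bigcup_(A in avail G h i) A = thetai h i.

Lemma tree_prefix z u : z \in tree G -> prefix u z -> u \in tree G.
Proof.
elim/last_ind: z u => [|z b IH] u; first by move=> H; rewrite prefixs0 => /eqP ->.
by move=> Hz /prefix_rconsP [-> //|]; apply: IH; exact: tree_rcons Hz.
Qed.

Lemma tree_rconsP h a : rcons h a \in tree G -> nonterminal G h /\ valid_aprofile G h a.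
Proof.
move=> H; have nt : nonterminal G h by rewrite /nonterminal (tree_rcons H); apply/existsP; exists a.
by split => //; rewrite -tree_succ.
Qed.

Lemma valid_aprofileP h a l : valid_aprofile G h a ->
  if l \in mover G h then (if a l is Some x then x \in avail G h l else false)
  else a l == None.
Proof. by move/forallP. Qed.

Lemma dnode_tree l h : dnode G l h -> h \in tree G.
Proof. by case/andP => /andP []. Qed.

Lemma dnode_nonterminal l h : dnode G l h -> nonterminal G h.
Proof. by case/andP. Qed.

Lemma terminal_nonterminalF h : terminal G h -> nonterminal G h = false.
Proof.
case/andP => _ /forallP H; apply/negbTE; rewrite negb_and negb_exists.
by apply/orP; right; apply/forallP.
Qed.

Lemma tree_terminal_or_nonterminal h : h \in tree G -> terminal G h || nonterminal G h.
Proof.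
move=> Hh; rewrite /terminal /nonterminal Hh /=; case: existsP => [_|H]; rewrite ?orbT ?orbF //.
by apply/forallP => a; apply: contra_notN H => Ha; exists a.
Qed.

Lemma nonterminal_proper_prefix z u : z \in tree G -> prefix u z -> size u < size z ->
  nonterminal G u.
Proof.
move=> Hz pu su; have /tree_rconsP [] // : rcons u (nth no_action z (size u)) \in tree G.
by rewrite -take_size_prefix //; exact: tree_prefix Hz (prefix_take _ _).
Qed.

Lemma dnode_proper_prefix l z u : z \in tree G -> prefix u z -> size u < size z ->
  l \in mover G u -> dnode G l u.
Proof. by move=> Hz pu su mu; rewrite /dnode (nonterminal_proper_prefix Hz pu su). Qed.

Lemma terminal_prefix_eq z w : terminal G z -> w \in tree G -> prefix z w -> z = w.
Proof.
move=> tz Hw pzw; apply/eqP; apply: contraT => nzw.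
by rewrite -(terminal_nonterminalF tz) (nonterminal_proper_prefix Hw pzw) ?prefix_size_lt.
Qed.

(* Hence [size (tree G)] steps, as in [play], reach a terminal history. *)
Lemma size_lt_tree h : h \in tree G -> size h < size (tree G).
Proof.
move=> Hh; have U : uniq [seq take k h | k <- iota 0 (size h).+1].
  rewrite map_inj_in_uniq ?iota_uniq // => k1 k2.
  rewrite !mem_iota !add0n !ltnS => k1h k2h e.
  by rewrite -(size_takel k1h) e size_takel.
have := uniq_leq_size U; rewrite size_map size_iota; apply => x /mapP [k _ ->].
exact: tree_prefix Hh (prefix_take _ _).
Qed.

Lemma thetai_rcons h a l : thetai (rcons h a) l = if a l is Some x then x else thetai h l.
Proof. by rewrite /thetai foldl_rcons. Qed.

(* Read off the experience, [thetai h l] is constant on information sets. *)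
Definition last_action l (e : seq (nat * option {set Theta l})) : {set Theta l} :=
  foldl (fun acc p => if p.2 is Some x then x else acc) setT e.

Lemma thetai_experience l h : h \in tree G -> thetai h l = last_action (experience G l h).
Proof.
elim/last_ind: h => [|h b IH] // Hh.
rewrite thetai_rcons experience_rcons /last_action foldl_cat -/(last_action _).
rewrite -IH ?(tree_rcons Hh) //; have [_ /(valid_aprofileP l)] := tree_rconsP Hh.
by case: ifP => _ /=; [case: (b l) | move/eqP ->].
Qed.

Lemma thetai_rcons_sub h a l : rcons h a \in tree G -> thetai (rcons h a) l \subset thetai h l.
Proof.
move=> Hh; have [nt /(valid_aprofileP l)] := tree_rconsP Hh; rewrite thetai_rcons.
case: ifP => m; last by move/eqP ->.
case: (a l) => [x|] // xa; rewrite -(action_cover (i := l) (h := h)) ?/dnode ?nt //.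
exact: bigcup_sup.
Qed.

Lemma thetai_prefix_sub z u l : z \in tree G -> prefix u z -> thetai z l \subset thetai u l.
Proof.
elim/last_ind: z => [|z b IH] Hz; first by rewrite prefixs0 => /eqP ->.
case/prefix_rconsP => [-> //| pu].
exact: subset_trans (thetai_rcons_sub _ Hz) (IH (tree_rcons Hz) pu).
Qed.

Lemma in_Theta_prefix z u th : z \in tree G -> prefix u z -> in_Theta z th -> in_Theta u th.
Proof. by move=> Hz pu H l; exact: (subsetP (thetai_prefix_sub l Hz pu)) (H l). Qed.

Lemma step_terminal s h : terminal G h -> step G s h = h.
Proof. by move=> Ht; rewrite /step terminal_nonterminalF. Qed.

Lemma valid_act_of s h : valid_sprofile G s -> nonterminal G h ->
  valid_aprofile G h (act_of G s h).
Proof.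
move=> vs nt; apply/forallP => l; rewrite ffunE; case: ifP => m; rewrite ?m //.
by apply: vs; rewrite /dnode nt m.
Qed.

Lemma iter_stepP s n : valid_sprofile G s ->
  let h := iter n (step G s) [::] in
  [/\ h \in tree G, size h = n \/ terminal G h &
      forall m, m < size h -> nth no_action h m = act_of G s (take m h)].
Proof.
move=> vs; elim: n => [|n [IH1 IH2 IH3]] /=; first by split => //; left.
set h := iter n _ _ in IH1 IH2 IH3 *.
case/orP: (tree_terminal_or_nonterminal IH1) => Ht.
  by rewrite step_terminal //; split => //; right.
rewrite /step Ht; split.
- by rewrite tree_succ // valid_act_of.
- by rewrite size_rcons; case: IH2 => [->|/terminal_nonterminalF]; [left | rewrite Ht].
- move=> m; rewrite size_rcons ltnS leq_eqVlt => /orP [/eqP ->|mh].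
    by rewrite nth_rcons ltnn eqxx -cats1 take_size_cat.
  by rewrite nth_rcons mh -cats1 takel_cat ?IH3 // ltnW.
Qed.

Lemma play_tree s : valid_sprofile G s -> play G s \in tree G.
Proof. by move=> vs; case: (iter_stepP (size (tree G)) vs). Qed.

Lemma play_terminal s : valid_sprofile G s -> terminal G (play G s).
Proof.
move=> vs; case: (iter_stepP (size (tree G)) vs) => H1 [H2|//] _.
by move: (size_lt_tree H1); rewrite /play H2 ltnn.
Qed.

Lemma nth_play s u : valid_sprofile G s -> prefix u (play G s) ->
  size u < size (play G s) -> nth no_action (play G s) (size u) = act_of G s u.
Proof.
move=> vs pu su; case: (iter_stepP (size (tree G)) vs) => _ _ /(_ _ su) ->.
by congr act_of; apply/eqP; rewrite -prefixE.
Qed.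

Lemma iter_step_prefix s n m : n <= m ->
  prefix (iter n (step G s) [::]) (iter m (step G s) [::]).
Proof.
move/subnK <-; elim: (m - n) => [|k IH]; first exact: prefix_refl.
apply: prefix_trans IH _; rewrite addSn /= /step.
by case: ifP => _; [exact: prefix_rcons | exact: prefix_refl].
Qed.

Lemma iter_step_play s n : valid_sprofile G s -> size (tree G) <= n ->
  iter n (step G s) [::] = play G s.
Proof.
move=> vs /subnK <-; rewrite iterD; elim: (n - _) => [//|k IH] /=.
by rewrite IH step_terminal // play_terminal.
Qed.

Lemma play_ext S t : valid_sprofile G t ->
  (forall u l, prefix u (play G t) -> nonterminal G u -> l \in mover G u ->
     S l (info G l u) = t l (info G l u)) -> play G S = play G t.
Proof.
move=> vt H; suff E n : iter n (step G S) [::] = iter n (step G t) [::] by rewrite /play E.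
elim: n => [//|n IH] /=; rewrite IH /step; case: ifP => nt //; congr rcons.
apply/ffunP => l; rewrite !ffunE; case: ifP => m //; congr Some; apply: H m => //.
case: (leqP n (size (tree G))) => hn; first exact: iter_step_prefix.
by move: nt; rewrite iter_step_play ?terminal_nonterminalF ?play_terminal // ltnW.
Qed.

Lemma terminal_tree z : terminal G z -> z \in tree G.
Proof. by case/andP. Qed.

(* Actions at a node partition [thetai]: a type of [l] determines the action of [l]. *)
Lemma thetai_succ_act p a b l (x : Theta l) :
  rcons p a \in tree G -> rcons p b \in tree G ->
  x \in thetai (rcons p a) l -> x \in thetai (rcons p b) l -> a l = b l.
Proof.
move=> /tree_rconsP [nt /(valid_aprofileP l) va] /tree_rconsP [_ /(valid_aprofileP l) vb].
rewrite !thetai_rcons; move: va vb; case: ifP => m; last by move=> /eqP -> /eqP ->.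
case: (a l) => [A|] // Aav; case: (b l) => [B|] // Bav xA xB.
case: (eqVneq A B) => [-> // | nAB].
have dn : dnode G l p by rewrite /dnode nt m.
by have := disjointFr (action_disjoint dn Aav Bav nAB) xA; rewrite xB.
Qed.

Lemma in_Theta_terminal_prefix h z th : h \in tree G -> terminal G z ->
  in_Theta h th -> in_Theta z th -> prefix h z.
Proof.
move=> Hh Tz ih iz; apply: contraT => nhz; have Hz := terminal_tree Tz.
case: (boolP (prefix z h)) => pzh.
  by rewrite (terminal_prefix_eq Tz Hh pzh) prefix_refl in nhz.
have [n [n1 n2 et ne]] := prefix_first_mismatch no_action nhz pzh.
have Ea : take n.+1 h = rcons (take n h) (nth no_action h n) by rewrite -take_nth.
have Eb : take n.+1 z = rcons (take n h) (nth no_action z n) by rewrite et -take_nth.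
have Ha : prefix (take n.+1 h) h := prefix_take _ _.
have Hb : prefix (take n.+1 z) z := prefix_take _ _.
case/negP: ne; apply/eqP/ffunP => l.
apply: (thetai_succ_act (p := take n h) (x := th l)); rewrite -?Ea -?Eb.
- exact: tree_prefix Hh Ha.
- exact: tree_prefix Hz Hb.
- exact: in_Theta_prefix Hh Ha ih l.
- exact: in_Theta_prefix Hz Hb iz l.
Qed.

Lemma thetai_neq0 l h : nonterminal G [::] -> h \in tree G -> exists x, x \in thetai h l.
Proof.
move=> nt0; elim/last_ind: h => [|h b IH] Hh.
  have dn : dnode G l [::] by rewrite /dnode nt0 mover_root in_setT.
  have /set0Pn [A HA] := avail_neq0 dn; have /set0Pn [x _] := action_neq0 dn HA.
  by exists x; rewrite /thetai in_setT.
have [nt /(valid_aprofileP l)] := tree_rconsP Hh; rewrite thetai_rcons.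
case: ifP => m; last by move/eqP => ->; exact: IH (tree_rcons Hh).
case: (b l) => [A|] // Aav; apply/set0Pn; apply: action_neq0 Aav.
by rewrite /dnode nt m.
Qed.

Lemma unconditional_play s d (t : Theta d) : valid_sprofile G s ->
  unconditional G t (s d) -> t \in thetai (play G s) d.
Proof.
move=> vs unc; rewrite /play; elim: (size (tree G)) => [|n IH] /=; first by rewrite in_setT.
rewrite /step; case: ifP => nt //; rewrite thetai_rcons ffunE.
by case: ifP => m //; apply: unc => //; rewrite /dnode nt m.
Qed.

Lemma tprofile_choice (P : forall l, pred (Theta l)) :
  (forall l, exists x, P l x) -> exists th : tprofile Theta, forall l, P l (th l).
Proof. by move=> H; exists (fun l => xchoose (H l)) => l; exact: xchooseP. Qed.

Definition upd_profile (th : tprofile Theta) d (x : Theta d) : tprofile Theta :=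
  fun l => if d =P l is ReflectT e then ecast l (Theta l) e x else th l.

Lemma upd_profile_eq th d (x : Theta d) : upd_profile th x d = x.
Proof. by rewrite /upd_profile; case: eqP => // e; rewrite (eq_axiomK e). Qed.

Lemma upd_profile_neq th d (x : Theta d) l : l != d -> upd_profile th x l = th l.
Proof. by move=> ne; rewrite /upd_profile; case: eqP => // e; subst l; rewrite eqxx in ne. Qed.

Lemma in_Theta_upd z th d (x : Theta d) : in_Theta z th -> x \in thetai z d ->
  in_Theta z (upd_profile th x).
Proof.
move=> H Hx l; case: (eqVneq l d) => [->|ne]; first by rewrite upd_profile_eq.
by rewrite upd_profile_neq.
Qed.

Lemma in_infoset_info l h : dnode G l h -> in_infoset G l (info G l h) h.
Proof. by move=> dh; rewrite /in_infoset dh eqxx. Qed.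

Lemma iprec_prefix l u v : dnode G l u -> dnode G l v -> prefix u v -> u != v ->
  iprec G l (info G l u) (info G l v).
Proof. by move=> du dv puv nuv; exists u, v; split; rewrite ?in_infoset_info. Qed.

Lemma experience_nil l u : experience G l u = [::] -> u = [::].
Proof.
move=> H; apply/eqP; apply: contraT => nu.
have m0 : l \in mover G [::] by rewrite mover_root in_setT.
by rewrite eq_sym in nu; have := size_experience_lt (prefix0s u) nu m0; rewrite H.
Qed.

Lemma no_infoset_between l k k1 x e : in_infoset G l k x -> in_infoset G l k1 e ->
  size (experience G l e) = (size (experience G l x)).+1 ->
  ~ (exists k'', iprec G l k k'' /\ iprec G l k'' k1).
Proof.
move=> /andP[dx /eqP ix] /andP[de /eqP ie] sz
  [k'' [[x' [y [/andP[dx' /eqP ix'] /andP[dy /eqP iy] pxy nxy]]]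
        [c [e' [/andP[dc /eqP ic] /andP[de' /eqP ie'] pce nce]]]]].
have e1 : experience G l x' = experience G l x by apply: perfect_recall; rewrite ?ix ?ix'.
have e2 : experience G l y = experience G l c by apply: perfect_recall; rewrite ?iy ?ic.
have e3 : experience G l e' = experience G l e by apply: perfect_recall; rewrite ?ie ?ie'.
have := size_experience_lt pxy nxy (andP dx').2.
have := size_experience_lt pce nce (andP dc).2.
by rewrite e1 e2 e3 sz ltnS => /(leq_trans _) H /H; rewrite ltnn.
Qed.

(* A longer experience would pass through an information set strictly
   between [k] and [k1]. *)
Lemma imm_succ_size l k k1 h e p : ~ (exists k'', iprec G l k k'' /\ iprec G l k'' k1) ->
  in_infoset G l k1 h -> e.1 = k -> prefix (rcons p e) (experience G l h) ->
  size (experience G l h) = (size p).+1.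
Proof.
move=> nb /andP [dh /eqP ih] ek st; have Hh := dnode_tree dh.
have sp := size_prefix st; rewrite size_rcons in sp.
apply/eqP; rewrite eqn_leq sp andbT leqNgt; apply/negP => lt.
have [c [pc sc mc ec _]] := experience_nth_move lt.
have [a [pa sa ma ea na]] := experience_nth_move sp.
have dc := dnode_proper_prefix Hh pc sc mc; have da := dnode_proper_prefix Hh pa sa ma.
have sea : size (experience G l a) = size p by rewrite ea size_takel // ltnW.
have sec : size (experience G l c) = (size p).+1 by rewrite ec size_takel // ltnW.
have ia : info G l a = k.
  move: st na; rewrite prefixE size_rcons -ek => /eqP st.
  by rewrite -(nth_take (no_event l) (ltnSn _)) st nth_rcons ltnn eqxx => ->.
have nac : a != c by apply/eqP => eac; move: sec; rewrite -eac sea => /n_Sn.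
apply: nb; exists (info G l c); split.
  rewrite -ia; apply: iprec_prefix => //.
  case/orP: (prefix_comparable pa pc) => // /(experience_prefix G l) /size_prefix.
  by rewrite sea sec ltnn.
by rewrite -ih; apply: iprec_prefix => //; apply/eqP => ech; move: sc; rewrite ech ltnn.
Qed.

Lemma imm_succ_experience l k k1 h : imm_succ G l k k1 -> in_infoset G l k1 h ->
  exists x, in_infoset G l k x /\
    experience G l h = rcons (experience G l x) (k, Some (thetai h l)).
Proof.
move=> [[x [y [inx /andP[dy /eqP iy] pxy nxy]]] nb] inh; case/andP: (inx) => dx /eqP ix.
case/andP: (inh) => dh /eqP ih; have Hy := dnode_tree dy; have Hh := dnode_tree dh.
have sxy := prefix_size_lt pxy nxy; set b := nth no_action y (size x).
have st := experience_at_move pxy sxy (andP dx).2.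
rewrite -/b ix (perfect_recall dy dh) ?iy // in st.
have /tree_rconsP [_ /(valid_aprofileP l)] : rcons x b \in tree G.
  by rewrite -take_size_prefix //; exact: tree_prefix Hy (prefix_take _ _).
rewrite (andP dx).2; case Eb: (b l) => [A|] // _; rewrite Eb in st.
have eh : experience G l h = rcons (experience G l x) (k, Some A).
  apply/esym/(prefix_size_eq st).
  by rewrite size_rcons (imm_succ_size nb inh _ st).
exists x; split => //.
by rewrite eh thetai_experience // eh /last_action -cats1 foldl_cat /= cats1.
Qed.

Lemma thetai_experience_prefix l z z' : z \in tree G -> z' \in tree G ->
  prefix (experience G l z) (experience G l z') -> thetai z' l \subset thetai z l.
Proof.
move=> Hz Hz' pe.
case: (ltnP (size (experience G l z)) (size (experience G l z'))) => H; last first.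
  have e : experience G l z = experience G l z'.
    by apply: (prefix_size_eq pe); apply/eqP; rewrite eqn_leq H size_prefix.
  by rewrite !thetai_experience // e.
have [u [pu su mu eu _]] := experience_nth_move H.
have eu' : experience G l u = experience G l z by rewrite eu; apply/eqP; rewrite -prefixE.
have <- : thetai u l = thetai z l by rewrite !thetai_experience ?eu' // (tree_prefix Hz' pu).
exact: thetai_prefix_sub Hz' pu.
Qed.

Definition labels l z : seq nat := map fst (experience G l z).

Lemma labels_move l z k : k \in labels l z ->
  exists u, [/\ prefix u z, size u < size z, l \in mover G u & info G l u = k].
Proof.
case/mapP => e /(nthP (no_event l)) [n Hn <-] ->.
by have [u [pu su mu _ ->]] := experience_nth_move Hn; exists u.
Qed.

Lemma move_labels l z u : prefix u z -> size u < size z -> l \in mover G u ->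
  info G l u \in labels l z.
Proof.
move=> pu su mu; rewrite /labels; have /prefixP [w ->] := experience_at_move pu su mu.
by rewrite map_cat mem_cat map_rcons mem_rcons mem_head.
Qed.

Lemma in_thetai_play_act t u l th : valid_sprofile G t ->
  prefix u (play G t) -> size u < size (play G t) -> l \in mover G u ->
  in_Theta (play G t) th -> th l \in t l (info G l u).
Proof.
move=> vt pu su mu it.
have pr : prefix (rcons u (nth no_action (play G t) (size u))) (play G t).
  by rewrite -take_size_prefix //; exact: prefix_take.
have := in_Theta_prefix (play_tree vt) pr it l.
by rewrite thetai_rcons nth_play // ffunE mu.
Qed.

(* The truthful strategy of type [x]: the action containing [x] at the first
   history of the information set in [tree G] (any action if there is none). *)
Definition infoset_rep l k : history Theta :=
  head [::] [seq h <- tree G | in_infoset G l k h].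

Definition truthful_strat l (x : Theta l) : strat Theta l :=
  fun k => let h0 := infoset_rep l k in
  if [pick A in avail G h0 l | x \in A] is Some A then A
  else if [pick A in avail G h0 l] is Some A then A else set0.

Lemma infoset_repP l k h : in_infoset G l k h -> in_infoset G l k (infoset_rep l k).
Proof.
move=> ih; have : h \in [seq h <- tree G | in_infoset G l k h].
  by rewrite mem_filter ih (dnode_tree (andP ih).1).
rewrite /infoset_rep; case E: [seq _ <- _ | _] => [//|h0 hs'] _ /=.
have : h0 \in [seq h <- tree G | in_infoset G l k h] by rewrite E mem_head.
by rewrite mem_filter => /andP [].
Qed.

Lemma truthful_valid l (x : Theta l) : valid_strat G (truthful_strat x).
Proof.
move=> h dh; rewrite /truthful_strat; have /andP [d0h /eqP i0] := infoset_repP (in_infoset_info dh).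
rewrite -(avail_info d0h dh i0); case: pickP => [A /andP [HA _] //|_].
case: pickP => [A HA //|H]; exfalso.
by have /set0Pn [A HA] := avail_neq0 d0h; move: (H A); rewrite HA.
Qed.

Lemma truthful_unconditional l (x : Theta l) : unconditional G x (truthful_strat x).
Proof.
move=> h dh xh; rewrite /truthful_strat.
have /andP [d0h /eqP i0] := infoset_repP (in_infoset_info dh).
have et : thetai (infoset_rep l (info G l h)) l = thetai h l.
  by rewrite !thetai_experience ?(dnode_tree dh) ?(dnode_tree d0h) // (perfect_recall d0h dh i0).
rewrite -et -(action_cover d0h) in xh; case/bigcupP: xh => A HA xA.
by case: pickP => [A' /andP[_ xA'] // | H]; move: (H A); rewrite HA xA.
Qed.

Lemma imm_succ_next_move l z v u : z \in tree G -> prefix v z -> prefix u z ->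
  size v < size z -> size u < size z -> l \in mover G v -> l \in mover G u ->
  size (experience G l u) = (size (experience G l v)).+1 ->
  imm_succ G l (info G l v) (info G l u).
Proof.
move=> Hz pv pu sv su mv mu sz.
have dv := dnode_proper_prefix Hz pv sv mv; have du := dnode_proper_prefix Hz pu su mu.
split; last by apply: (no_infoset_between (in_infoset_info dv) (in_infoset_info du)).
apply: iprec_prefix => //.
  case/orP: (prefix_comparable pv pu) => // /(experience_prefix G l) /size_prefix.
  by rewrite sz ltnn.
by apply/eqP => evu; move: sz; rewrite evu => /n_Sn.
Qed.

Lemma diverging_experiences l s s' : valid_sprofile G s -> valid_sprofile G s' ->
  s l =1 s' l ->
  ~~ prefix (experience G l (play G s)) (experience G l (play G s')) ->
  ~~ prefix (experience G l (play G s')) (experience G l (play G s)) ->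
  exists k u1 u2,
    [/\ [/\ prefix u1 (play G s), dnode G l u1 & imm_succ G l k (info G l u1)],
        [/\ prefix u2 (play G s'), dnode G l u2 & imm_succ G l k (info G l u2)],
        info G l u1 != info G l u2 & thetai u1 l = thetai u2 l].
Proof.
move=> vs vs' sl np1 np2; have Hz := play_tree vs; have Hz' := play_tree vs'.
have [n [n1 n2 et ne]] := prefix_first_mismatch (no_event l) np1 np2.
have [u1 [pu1 su1 mu1 eu1 nu1]] := experience_nth_move n1.
have [u2 [pu2 su2 mu2 eu2 nu2]] := experience_nth_move n2.
rewrite nth_play // ffunE mu1 in nu1; rewrite nth_play // ffunE mu2 in nu2.
have du1 := dnode_proper_prefix Hz pu1 su1 mu1.
have du2 := dnode_proper_prefix Hz' pu2 su2 mu2.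
have nk : info G l u1 != info G l u2 by apply: contra ne => /eqP e; rewrite nu1 nu2 e sl.
have eE : experience G l u1 = experience G l u2 by rewrite eu1 eu2 et.
case: n n1 n2 et {ne nu1 nu2} eu1 eu2 eE => [|n] n1 n2 et eu1 eu2 eE.
  rewrite take0 in eu1; rewrite take0 in eu2.
  by rewrite (experience_nil eu1) (experience_nil eu2) eqxx in nk.
have [a [pa sa ma ea na]] := experience_nth_move (ltnW n1).
have [b [pb sb mb eb nb]] := experience_nth_move (ltnW n2).
have kab : info G l a = info G l b.
  have : nth (no_event l) (experience G l (play G s)) n =
         nth (no_event l) (experience G l (play G s')) n.
    by rewrite -(nth_take _ (ltnSn n) (experience G l (play G s))) et nth_take.
  by rewrite na nb => -[].
have size_n m (v : history Theta) e : m <= size e -> experience G l v = take m e ->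
  size (experience G l v) = m by move=> me ->; rewrite size_takel.
exists (info G l a), u1, u2; split => //; [split => // | split => // |].
- apply: imm_succ_next_move Hz pa pu1 sa su1 ma mu1 _.
  by rewrite (size_n _ _ _ (ltnW n1) eu1) (size_n _ _ _ (ltnW (ltnW n1)) ea).
- rewrite kab; apply: imm_succ_next_move Hz' pb pu2 sb su2 mb mu2 _.
  by rewrite (size_n _ _ _ (ltnW n2) eu2) (size_n _ _ _ (ltnW (ltnW n2)) eb).
- by rewrite !thetai_experience ?eE ?(dnode_tree du1) ?(dnode_tree du2).
Qed.

Lemma size_lt_play t u : valid_sprofile G t -> prefix u (play G t) -> nonterminal G u ->
  size u < size (play G t).
Proof.
move=> vt pu nu; apply: prefix_size_lt pu _; apply/eqP => eu.
by move: nu; rewrite eu terminal_nonterminalF // play_terminal.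
Qed.

(* By perfect recall a common information set sits at the same position of
   both experiences, so it precedes their first difference. *)
Lemma common_labels_agree i t1 t2 h1 h2 :
  valid_sprofile G t1 -> valid_sprofile G t2 ->
  prefix h1 (play G t1) -> size h1 < size (play G t1) ->
  prefix h2 (play G t2) -> size h2 < size (play G t2) ->
  i \in mover G h1 -> i \in mover G h2 ->
  experience G i h1 = experience G i h2 -> info G i h1 != info G i h2 ->
  forall c, c \in labels i (play G t1) -> c \in labels i (play G t2) -> t1 i c = t2 i c.
Proof.
move=> vt1 vt2 ph1 sh1 ph2 sh2 mh1 mh2 eh nk c.
move=> /labels_move [u1 [pu1 su1 mu1 iu1]] /labels_move [u2 [pu2 su2 mu2 iu2]].
have du1 := dnode_proper_prefix (play_tree vt1) pu1 su1 mu1.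
have du2 := dnode_proper_prefix (play_tree vt2) pu2 su2 mu2.
have eu : experience G i u1 = experience G i u2 by apply: perfect_recall; rewrite ?iu1 ?iu2.
have [tq1 nq1 _] := experience_nth ph1 sh1 mh1.
have [tq2 nq2 _] := experience_nth ph2 sh2 mh2.
have [tp1 np1 _] := experience_nth pu1 su1 mu1.
have [tp2 np2 _] := experience_nth pu2 su2 mu2.
rewrite -eh in tq2 nq2; rewrite -eu in tp2 np2.
rewrite nth_play // ffunE mu1 iu1 in np1; rewrite nth_play // ffunE mu2 iu2 in np2.
have lt : size (experience G i u1) < size (experience G i h1).
  apply: (agreeing_before_mismatch (x0 := no_event i) (g := fst)
    (s1 := experience G i (play G t1)) (s2 := experience G i (play G t2)));
  by rewrite ?tp1 ?tp2 ?np1 ?np2 ?tq1 ?tq2 ?nq1 ?nq2.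
have : nth (no_event i) (experience G i (play G t1)) (size (experience G i u1)) =
       nth (no_event i) (experience G i (play G t2)) (size (experience G i u1)).
  by rewrite -(nth_take _ lt) tq1 -{1}tq2 nth_take.
by rewrite np1 np2 => -[].
Qed.

Section Deviation.
Variables (i j : Agent) (s t1 t2 : sprofile Theta) (th : tprofile Theta).
Let M := setT :\ i :\ j.
Hypotheses (vt1 : valid_sprofile G t1) (vt2 : valid_sprofile G t2).
Hypothesis vM : forall l, l \in M -> valid_strat G (s l).
Hypotheses (ag1 : forall l, l \in M -> s l =1 t1 l) (ag2 : forall l, l \in M -> s l =1 t2 l).
Hypothesis common_agree :
  forall c, c \in labels i (play G t1) -> c \in labels i (play G t2) -> t1 i c = t2 i c.
Hypothesis th_play : in_Theta (play G t1) th.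

Definition deviant_profile : sprofile Theta := fun l c =>
  if l \in M then s l c else if c \in labels l (play G t2) then t2 l c else t1 l c.

Definition honest_profile : sprofile Theta := fun l c =>
  if l == j then (if c \in labels l (play G t1) then t1 l c else truthful_strat (th l) c)
  else deviant_profile l c.

Lemma deviant_valid : valid_sprofile G deviant_profile.
Proof.
move=> l h dh; rewrite /deviant_profile; case: ifP => lM; first exact: vM.
by case: ifP => _; [exact: vt2 | exact: vt1].
Qed.

Lemma honest_valid : valid_sprofile G honest_profile.
Proof.
move=> l h dh; rewrite /honest_profile; case: ifP => _; last exact: deviant_valid.
by case: ifP => _; [exact: vt1 | exact: truthful_valid].
Qed.

Lemma honest_deviant l : l != j -> honest_profile l =1 deviant_profile l.
Proof. by move=> nl c; rewrite /honest_profile (negbTE nl). Qed.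

Lemma honest_unconditional : unconditional G (th j) (honest_profile j).
Proof.
move=> h dh thh; rewrite /honest_profile eqxx; case: ifP => Hk.
  by case/labels_move: Hk => u [pu su mu <-]; exact: in_thetai_play_act.
exact: truthful_unconditional.
Qed.

Lemma notin_setD1D1 l : l \notin M -> l != j -> l = i.
Proof. by rewrite !in_setD1 in_setT andbT => /nandP [] /negPn/eqP // ->; rewrite eqxx. Qed.

Lemma play_deviant : play G deviant_profile = play G t2.
Proof.
apply: play_ext => // u l pu nu mu; rewrite /deviant_profile; case: ifP => lM; first exact: ag2.
by rewrite move_labels ?size_lt_play.
Qed.

Lemma play_honest : play G honest_profile = play G t1.
Proof.
apply: play_ext => // u l pu nu mu; have Hl := move_labels pu (size_lt_play vt1 pu nu) mu.
rewrite /honest_profile /deviant_profile; case: (eqVneq l j) => [elj | nlj].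
  by subst l; rewrite Hl.
case: ifP => lM; first exact: ag1.
rewrite (notin_setD1D1 (negbT lM) nlj) in Hl *; case: ifP => // H2.
by rewrite common_agree.
Qed.

End Deviation.

Lemma in_Theta_exists z : nonterminal G [::] -> z \in tree G -> exists th, in_Theta z th.
Proof.
move=> nt0 Hz.
exact: (tprofile_choice (P := fun l x => x \in thetai z l)) (fun l => thetai_neq0 l nt0 Hz).
Qed.

Lemma play_root_terminal t : terminal G [::] -> play G t = [::].
Proof. by move=> T0; rewrite /play; elim: (size (tree G)) => //= n ->; exact: step_terminal. Qed.

Section Implementation.
Variables (f : tprofile Theta -> X) (R : forall i : Agent, Theta i -> rel X).
Hypothesis outc_f : forall z th, terminal G z -> in_Theta z th -> outc G z = f th.

Lemma IC_reaction_proof : incentive_compatible G R -> reaction_proof G R f.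
Proof.
move=> IC i j nij k k1 k2 h1 h2 s M nk imm1 imm2 in1 in2 eth vM _ _ th1 th2 it1 it2
  [z1 [tz1 iz1 [t1 [vt1 ag1 pz1]]]] [z2 [tz2 iz2 [t2 [vt2 ag2 pz2]]]].
have ez1 := terminal_prefix_eq tz1 (play_tree vt1) pz1.
have ez2 := terminal_prefix_eq tz2 (play_tree vt2) pz2.
subst z1 z2; case/andP: (in1) => dh1 /eqP ih1; case/andP: (in2) => dh2 /eqP ih2.
have ph1 := in_Theta_terminal_prefix (dnode_tree dh1) tz1 it1 iz1.
have ph2 := in_Theta_terminal_prefix (dnode_tree dh2) tz2 it2 iz2.
have eh : experience G i h1 = experience G i h2.
  have [x1 [/andP [dx1 /eqP ix1] ->]] := imm_succ_experience imm1 in1.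
  have [x2 [/andP [dx2 /eqP ix2] ->]] := imm_succ_experience imm2 in2.
  by rewrite eth (perfect_recall dx1 dx2) // ix1 ix2.
have common := common_labels_agree vt1 vt2 ph1 (size_lt_play vt1 ph1 (dnode_nonterminal dh1))
  ph2 (size_lt_play vt2 ph2 (dnode_nonterminal dh2)) (andP dh1).2 (andP dh2).2 eh.
rewrite ih1 ih2 in common; have {}common := common nk.
have := IC j (th1 j) _ _ (honest_valid th1 vt1 vt2 vM) (deviant_valid vt1 vt2 vM)
  (@honest_deviant i j s t1 t2 th1) (honest_unconditional i s t2 vt1 iz1).
rewrite /outcome (play_honest th1 vt1 ag1 common) (play_deviant t1 vt2 ag2).
by rewrite (outc_f tz1 iz1) (outc_f tz2 iz2).
Qed.

Hypothesis R_refl : forall i (t : Theta i) x, R t x x.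
Hypothesis f_sp : strategy_proof R f.

(* If no opponent of [d] notices the deviation, strategy-proofness compares
   the two outcomes through a common type profile of the other agents. *)
Lemma comparable_experiences_pref d (tau : Theta d) z z' :
  nonterminal G [::] -> terminal G z -> terminal G z' -> tau \in thetai z d ->
  (forall l, l != d ->
     prefix (experience G l z) (experience G l z') ||
     prefix (experience G l z') (experience G l z)) ->
  R tau (outc G z) (outc G z').
Proof.
move=> nt0 Tz Tz' tz Hc; have Hz := terminal_tree Tz; have Hz' := terminal_tree Tz'.
have [th' Hth'] : exists th' : tprofile Theta,
    forall l, (th' l \in thetai z' l) && ((l != d) ==> (th' l \in thetai z l)).
  apply: (tprofile_choice
    (P := fun l x => (x \in thetai z' l) && ((l != d) ==> (x \in thetai z l)))).
  move=> l; case: (eqVneq l d) => [->|nl] /=.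
    by have [x Hx] := thetai_neq0 d nt0 Hz'; exists x; rewrite Hx.
  case/orP: (Hc l nl) => [/(thetai_experience_prefix Hz Hz') sub
                        | /(thetai_experience_prefix Hz' Hz) sub].
    by have [x Hx] := thetai_neq0 l nt0 Hz'; exists x; rewrite Hx (subsetP sub).
  by have [x Hx] := thetai_neq0 l nt0 Hz; exists x; rewrite (subsetP sub) ?Hx.
have i' : in_Theta z' th' by move=> l; case/andP: (Hth' l).
have i'' : in_Theta z (upd_profile th' tau).
  move=> l; case: (eqVneq l d) => [->|nl]; first by rewrite upd_profile_eq.
  by rewrite upd_profile_neq //; case/andP: (Hth' l) => _; rewrite nl.
rewrite (outc_f Tz i'') (outc_f Tz' i').
have := f_sp (i := d) (th := upd_profile th' tau) (th' := th'); rewrite upd_profile_eq.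
by apply=> l nl; exact: upd_profile_neq.
Qed.

Lemma reaction_proof_IC : reaction_proof G R f -> incentive_compatible G R.
Proof.
move=> RP d tau s s' vs vs' ag unc; rewrite /outcome.
have [Tz Tz'] := (play_terminal vs, play_terminal vs').
case: (boolP (nonterminal G [::])) => nt0; last first.
  have T0 : terminal G [::].
    by move: (tree_terminal_or_nonterminal root_in_tree); rewrite (negbTE nt0) orbF.
  by rewrite !play_root_terminal // R_refl.
have tz := unconditional_play vs unc.
set e := fun l t => experience G l (play G t).
case: (boolP [forall l, (l != d) ==> (prefix (e l s) (e l s') || prefix (e l s') (e l s))]) => Hc.
  by apply: comparable_experiences_pref => // l nl; exact: (implyP (forallP Hc l)).
case/existsP: Hc => l; rewrite negb_imply negb_or => /andP [nld /andP [np1 np2]].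
have [k [u1 [u2 [[pu1 du1 imm1] [pu2 du2 imm2] nk eth]]]] :=
  diverging_experiences vs vs' (ag l nld) np1 np2.
have [th0 i0] := in_Theta_exists nt0 (play_tree vs).
have [th2 i2] := in_Theta_exists nt0 (play_tree vs').
have i1 := in_Theta_upd i0 tz.
have M_s l0 : l0 \in setT :\ l :\ d -> valid_strat G (s l0) by move=> _; exact: vs.
have M_ag j0 : j0 \in setT :\ l :\ d -> s j0 =1 s' j0 by case/setD1P => nj0 _; exact: ag.
have := RP l d nld k _ _ u1 u2 s nk imm1 imm2 (in_infoset_info du1) (in_infoset_info du2) eth M_s
  _ _ _ _ (in_Theta_prefix (play_tree vs) pu1 i1) (in_Theta_prefix (play_tree vs') pu2 i2).
rewrite upd_profile_eq (outc_f Tz i1) (outc_f Tz' i2); apply.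
- by exists s; split.
- by exists s'; split.
- by exists (play G s); split => //; exists s; split => //; exact: prefix_refl.
- by exists (play G s'); split => //; exists s'; split => //; exact: prefix_refl.
Qed.

End Implementation.
End GameForm.

Theorem theorem2 (Agent : finType) (Theta : Agent -> finType) (X : finType)
  (R : forall i : Agent, Theta i -> rel X) (f : tprofile Theta -> X)
  (G : game Theta X) :
  (forall i (t : Theta i), complete_rel (R i t)) ->
  (forall i (t : Theta i), transitive (R i t)) ->
  strategy_proof R f -> is_GM G f ->
  incentive_compatible G R <-> reaction_proof G R f.
Proof.
move=> R_complete _ f_sp [[root [prefix_closed [mover0 [_ [succ [avail0 [avail_info recall]]]]]]]
  action0 disjoint cover outc_f].
have R_refl i (t : Theta i) x : R i t x x by have := R_complete i t x x; rewrite orbb.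
split; [exact: IC_reaction_proof | exact: reaction_proof_IC].
Qed.
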